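(* Let $M=B\circ S$ with $S$ subsampling without replacement with batch size $q$, let the dataset relation be substitution $\simeq_\Delta$ and the batch relation be insertion/removal $\simeq_\pm$ with induced distance $d_\pm$. Then for every $\alpha>1$ and all datasets $x\simeq_\Delta x'$ of size $N$, $$\Lambda_\alpha(m_x\|m_{x'})\le\max_{y^{(1)}_1,y^{(1)}_2,y^{(2)}_1,y^{(2)}_2\in\mathbb Y}\Lambda_\alpha\big((1-w)b_{y^{(1)}_1}+w\,b_{y^{(1)}_2}\ \big\|\ (1-w)b_{y^{(2)}_1}+w\,b_{y^{(2)}_2}\big)$$ subject to $y^{(1)}_1=y^{(2)}_1$, $d_\pm(y^{(1)}_1,y^{(1)}_2)\le2$, $d_\pm(y^{(1)}_1,y^{(2)}_2)\le2$, $d_\pm(y^{(1)}_2,y^{(2)}_2)\le2$, where $w=q/N$.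
   Context: Finite set $\mathbb A$, datasets are subsets of $\mathbb A$ with more than $q$ elements; the batch space $\mathbb Y$ consists of subsets of size $q$ (of datasets). Subsampling without replacement: $s_x(y)=\binom{|x|}{q}^{-1}$ for $y\subseteq x$, $|y|=q$. $B$ assigns a density $b_y$ on $\mathbb R^D$ to each batch; $m_x=\sum_y b_y s_x(y)$. $x\simeq_\Delta x'$ iff $x'=(x\setminus\{a\})\cup\{a'\}$ with $a\in x$, $a'\notin x$. $y\simeq_\pm y'$ iff one is obtained from the other by inserting or removing one element; $d_\pm$ is the induced distance (length of shortest chain of neighbors, measured through arbitrary finite subsets of $\mathbb A$). $\Lambda_\alpha(p\|q)=\int p^\alpha q^{1-\alpha}dz$. *)

From HB Require Import structures.
From mathcomp Require Import all_boot all_order all_algebra.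
From mathcomp Require Import all_classical all_reals all_analysis.
Set Implicit Arguments. Unset Strict Implicit. Unset Printing Implicit Defensive.
Import Order.TTheory GRing.Theory Num.Theory.
Local Open Scope classical_set_scope.
Local Open Scope ring_scope.

(* pointwise integrand p^a q^(1-a) of Lambda_a(p||q), for a > 1,
   with the standard conventions 0^a * q^(1-a) = 0 and p^a * 0^(1-a) = +oo (p>0) *)
Definition renyi_pt (R : realType) (a p q : R) : \bar R :=
  if p == 0 then 0%E
  else if q == 0 then +oo%E
  else ((p `^ a) * (q `^ (1 - a)))%:E.

Definition Lambda (R : realType) (d : measure_display) (T : measurableType d)
  (mu : {measure set T -> \bar R}) (a : R) (p q : T -> R) : \bar R :=
  (\int[mu]_(z in setT) renyi_pt a (p z) (q z))%E.

Definition is_density (R : realType) (d : measure_display) (T : measurableType d)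
  (mu : {measure set T -> \bar R}) (f : T -> R) : Prop :=
  measurable_fun setT f /\ (forall z, 0 <= f z) /\
  (\int[mu]_(z in setT) (f z)%:E = 1)%E.

(* subsampled mechanism m_x = sum_y b_y s_x(y), s_x(y) = 1 / C(|x|, q)
   for y \subset x with |y| = q (subsampling without replacement) *)
Definition subsampled (R : realType) (A : finType) (T : Type) (q : nat)
  (b : {set A} -> T -> R) (x : {set A}) : T -> R :=
  fun z => \sum_(y : {set A} | (y \subset x) && (#|y| == q))
             b y z * ('C(#|x|, q)%:R)^-1.

Definition subst_rel (A : finType) (x x' : {set A}) : Prop :=
  exists a a', [/\ a \in x, a' \notin x & x' = a' |: (x :\ a)].

Definition pm_nbr (A : finType) (y y' : {set A}) : Prop :=
  (exists a, a \notin y /\ y' = a |: y) \/ (exists a, a \in y /\ y' = y :\ a).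

(* dpm_le n y y' <-> d_pm(y, y') <= n, i.e. there is a chain of at most n
   ~_pm-steps from y to y' through arbitrary (finite) subsets of A *)
Fixpoint dpm_le (A : finType) (n : nat) (y y' : {set A}) : Prop :=
  match n with
  | 0 => y = y'
  | n'.+1 => dpm_le n' y y' \/ exists z, dpm_le n' y z /\ pm_nbr z y'
  end.

Definition mix (R : realType) (T : Type) (w : R) (f g : T -> R) : T -> R :=
  fun z => (1 - w) * f z + w * g z.

From HB Require Import structures.
From mathcomp Require Import all_boot all_order all_algebra.
From mathcomp Require Import all_classical all_reals all_analysis.
From mathcomp Require Import ring zify measurable_realfun.
Set Implicit Arguments. Unset Strict Implicit. Unset Printing Implicit Defensive.
Import Order.TTheory GRing.Theory Num.Theory.
Local Open Scope classical_set_scope.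
Local Open Scope ring_scope.

(* Put X := x :\ a and x' = a' |: X.  A batch of x avoiding a is a q-subset y
   of X, and a batch containing a is a |: (y :\ c) for exactly N - q "pointed
   batches" (y, c) with y a q-subset of X and c \in y.  Hence m_x is the uniform
   average over pointed batches of the mixtures (1 - w) b_y + w b_(a |: y :\ c),
   and m_x' is the same average with a' in place of a.  The integrand
   p^a q^(1-a) is the perspective of the convex map t |-> t^a, so Lambda is
   jointly convex and positively homogeneous, and Lambda(m_x || m_x') is at most
   the average of Lambda over the paired mixtures.  Each pair occurs in the
   maximum: y, a |: y :\ c and a' |: y :\ c are q-sets at +-distance <= 2. *)

Section renyi_pt.
Variable R : realType.
Implicit Types a p q l x y : R.

Lemma powR_perspective a x y : 0 <= x -> 0 < y ->
  x `^ a * y `^ (1 - a) = y * (x / y) `^ a.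
Proof.
move=> x0 y0; rewrite powRM ?invr_ge0 ?(ltW y0) // -(powR_inv1 (ltW y0)).
rewrite -powRrM mulN1r powRN powRB; last by apply/implyP => _; rewrite gt_eqF.
by rewrite powRr1 ?(ltW y0) // mulrCA.
Qed.

Lemma powR_perspective_subadd a p1 p2 q1 q2 : 1 < a ->
  0 <= p1 -> 0 <= p2 -> 0 < q1 -> 0 < q2 ->
  (p1 + p2) `^ a * (q1 + q2) `^ (1 - a) <=
    p1 `^ a * q1 `^ (1 - a) + p2 `^ a * q2 `^ (1 - a).
Proof.
move=> a1 p10 p20 q10 q20; have q0 : 0 < q1 + q2 by rewrite addr_gt0.
rewrite !powR_perspective ?addr_ge0 //.
have t0 : 0 <= q1 / (q1 + q2) by rewrite divr_ge0 ?ltW.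
have t1 : q1 / (q1 + q2) <= 1 by rewrite ler_pdivrMr // mul1r lerDl ltW.
have ratio_ge0 p q : 0 <= p -> 0 < q -> p / q \in (`[0, +oo[%classic : set R).
  by move=> p0 {}q0; rewrite inE /= in_itv /= andbT divr_ge0 // ltW.
(* Jensen for [t `^ a] at the points [p_i / q_i] with weights [q_i / (q1 + q2)]. *)
have := convex_powR (ltW a1) (Itv01 t0 t1) (ratio_ge0 _ _ p10 q10) (ratio_ge0 _ _ p20 q20).
rewrite convRE [X in X `^ _ <= _]convRE /= /unstable.onem => jensen.
set u := (p1 / q1) `^ a; set v := (p2 / q2) `^ a.
have -> : q1 * u + q2 * v = (q1 + q2) * (q1 / (q1 + q2) * u + (1 - q1 / (q1 + q2)) * v).
  by field; rewrite gt_eqF.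
have -> : (p1 + p2) / (q1 + q2) =
    q1 / (q1 + q2) * (p1 / q1) + (1 - q1 / (q1 + q2)) * (p2 / q2).
  by field; rewrite ?gt_eqF.
by apply: ler_wpM2l; [exact: ltW | exact: jensen].
Qed.

Local Open Scope ereal_scope.

Lemma renyi_pt_ge0 a p q : 0 <= renyi_pt a p q.
Proof.
rewrite /renyi_pt; case: ifP => _ //; case: ifP => _ //.
by rewrite lee_fin mulr_ge0 // powR_ge0.
Qed.

Lemma renyi_pt0l a q : renyi_pt a 0 q = 0.
Proof. by rewrite /renyi_pt eqxx. Qed.

Lemma renyi_ptr0 a p : (p != 0)%R -> renyi_pt a p 0 = +oo.
Proof. by move=> p0; rewrite /renyi_pt (negbTE p0) eqxx. Qed.

Lemma renyi_pt_gt0r a p q : (a != 0)%R -> (0 < q)%R ->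
  renyi_pt a p q = (p `^ a * q `^ (1 - a))%:E.
Proof.
move=> a0 q0; rewrite /renyi_pt (gt_eqF q0); case: ifPn => // /eqP ->.
by rewrite powR0 // mul0r.
Qed.

Lemma renyi_ptZ a l p q : (0 <= l)%R -> (0 <= p)%R -> (0 <= q)%R ->
  renyi_pt a (l * p) (l * q) = l%:E * renyi_pt a p q.
Proof.
rewrite le_eqVlt => /predU1P[<- _ _|l0 p0 q0]; first by rewrite !mul0r renyi_pt0l mul0e.
rewrite /renyi_pt !mulf_eq0 (gt_eqF l0) /=.
case: ifP => _; first by rewrite mule0.
case: ifP => _; first by rewrite gt0_muley ?lte_fin.
rewrite -EFinM !powRM ?(ltW l0) // mulrACA -powRD; last by apply/implyP => _; rewrite gt_eqF.
by rewrite addrC subrK powRr1 // ltW.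
Qed.

Lemma renyi_ptD_le a p1 p2 q1 q2 : (1 < a)%R ->
  (0 <= p1)%R -> (0 <= p2)%R -> (0 <= q1)%R -> (0 <= q2)%R ->
  renyi_pt a (p1 + p2) (q1 + q2) <= renyi_pt a p1 q1 + renyi_pt a p2 q2.
Proof.
move=> a1 p10 p20 q10 q20; have a0 : (a != 0)%R by rewrite gt_eqF // (lt_trans _ a1).
have oo_addr (e r : \bar R) : 0 <= r -> e <= +oo + r by case: r => [r||] //= _; rewrite leey.
have [->|P0] := eqVneq (p1 + p2)%R 0%R; first by rewrite renyi_pt0l adde_ge0 ?renyi_pt_ge0.
have [q1_0|q1_neq0] := eqVneq q1 0%R.
  have [p1_0|p1_neq0] := eqVneq p1 0%R; first by rewrite q1_0 p1_0 !add0r renyi_pt0l add0e.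
  by rewrite q1_0 renyi_ptr0 // oo_addr ?renyi_pt_ge0.
have [q2_0|q2_neq0] := eqVneq q2 0%R.
  have [p2_0|p2_neq0] := eqVneq p2 0%R; first by rewrite q2_0 p2_0 !addr0 renyi_pt0l adde0.
  by rewrite q2_0 renyi_ptr0 // addeC oo_addr ?renyi_pt_ge0.
have q1_gt0 : (0 < q1)%R by rewrite lt0r q1_neq0.
have q2_gt0 : (0 < q2)%R by rewrite lt0r q2_neq0.
rewrite !renyi_pt_gt0r ?addr_gt0 // -EFinD lee_fin.
exact: powR_perspective_subadd.
Qed.

Lemma measurable_renyi_pt (d : measure_display) (T : measurableType d) a (f g : T -> R) :
  measurable_fun setT f -> measurable_fun setT g ->
  measurable_fun setT ((fun z => renyi_pt a (f z) (g z)) : T -> \bar R).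
Proof.
move=> mf mg; apply: measurable_fun_ifT.
- exact: (measurable_fun_eqr mf (measurable_cst _)).
- exact: measurable_cst.
apply: measurable_fun_ifT.
- exact: (measurable_fun_eqr mg (measurable_cst _)).
- exact: measurable_cst.
apply/measurable_EFinP; apply: measurable_funM.
- exact: (measurableT_comp (measurable_powR a) mf).
- exact: (measurableT_comp (measurable_powR _) mg).
Qed.

End renyi_pt.

Section Lambda_convexity.
Variables (R : realType) (d : measure_display) (T : measurableType d).
Variable mu : {measure set T -> \bar R}.
Implicit Types f g : T -> R.
Local Open Scope ereal_scope.

Lemma LambdaZ a l f g : (0 <= l)%R ->
  measurable_fun setT f -> measurable_fun setT g ->
  (forall z, 0 <= f z)%R -> (forall z, 0 <= g z)%R ->
  Lambda mu a (fun z => l * f z)%R (fun z => l * g z)%R = l%:E * Lambda mu a f g.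
Proof.
move=> l0 mf mg f0 g0; rewrite /Lambda -ge0_integralZl_EFin //.
- by apply: eq_integral => z _; rewrite renyi_ptZ.
- by move=> z _; exact: renyi_pt_ge0.
- exact: measurable_renyi_pt.
Qed.

Lemma Lambda_subadd a f1 f2 g1 g2 : (1 < a)%R ->
  measurable_fun setT f1 -> measurable_fun setT f2 ->
  measurable_fun setT g1 -> measurable_fun setT g2 ->
  (forall z, 0 <= f1 z)%R -> (forall z, 0 <= f2 z)%R ->
  (forall z, 0 <= g1 z)%R -> (forall z, 0 <= g2 z)%R ->
  Lambda mu a (fun z => f1 z + f2 z)%R (fun z => g1 z + g2 z)%R <=
    Lambda mu a f1 g1 + Lambda mu a f2 g2.
Proof.
move=> a1 mf1 mf2 mg1 mg2 f10 f20 g10 g20; rewrite /Lambda -ge0_integralD //.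
- apply: ge0_le_integral => //.
  + by move=> z _; exact: renyi_pt_ge0.
  + by apply: measurable_renyi_pt; exact: measurable_funD.
  + by apply: emeasurable_funD; exact: measurable_renyi_pt.
  + by move=> z _; exact: renyi_ptD_le.
- by move=> z _; exact: renyi_pt_ge0.
- exact: measurable_renyi_pt.
- by move=> z _; exact: renyi_pt_ge0.
- exact: measurable_renyi_pt.
Qed.

Lemma Lambda_convex a (I : Type) (s : seq I) (P : pred I) (l : I -> R)
    (F G : I -> T -> R) :
  (1 < a)%R -> (forall i, P i -> 0 <= l i)%R ->
  (forall i, P i -> measurable_fun setT (F i)) ->
  (forall i, P i -> measurable_fun setT (G i)) ->
  (forall i z, P i -> 0 <= F i z)%R -> (forall i z, P i -> 0 <= G i z)%R ->
  Lambda mu a (fun z => \sum_(i <- s | P i) l i * F i z)%R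
              (fun z => \sum_(i <- s | P i) l i * G i z)%R <=
    \sum_(i <- s | P i) (l i)%:E * Lambda mu a (F i) (G i).
Proof.
move=> a1 l0 mF mG F0 G0.
pose S (H : I -> T -> R) r z := (\sum_(i <- r | P i) l i * H i z)%R.
have S_cons H i r : S H (i :: r) =
    if P i then (fun z => l i * H i z + S H r z)%R else S H r.
  by rewrite /S; case: ifP => Pi; apply/funext => z; rewrite big_cons Pi.
have S_ge0 H r z : (forall i z, P i -> 0 <= H i z)%R -> (0 <= S H r z)%R.
  by move=> H0; apply: sumr_ge0 => i Pi; rewrite mulr_ge0 ?l0 ?H0.
have mlF i : P i -> measurable_fun setT (fun z => l i * F i z)%R.
  by move=> Pi; apply: measurable_funM; [exact: measurable_cst | exact: mF].
have mlG i : P i -> measurable_fun setT (fun z => l i * G i z)%R.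
  by move=> Pi; apply: measurable_funM; [exact: measurable_cst | exact: mG].
(* The induction carries the measurability of the partial sums, needed by [Lambda_subadd]. *)
suff : [/\ measurable_fun setT (S F s), measurable_fun setT (S G s) &
  Lambda mu a (S F s) (S G s) <= \sum_(i <- s | P i) (l i)%:E * Lambda mu a (F i) (G i)].
  by case.
elim: s => [|i s [mSF mSG IH]].
  have S_nil H : S H [::] = fun=> 0%R by apply/funext => z; rewrite /S big_nil.
  rewrite !S_nil big_nil /Lambda; split; try exact: measurable_cst.
  by under eq_integral do rewrite renyi_pt0l; rewrite integral0.
rewrite !S_cons big_cons; case: ifP => Pi //; split.
- exact: measurable_funD (mlF i Pi) mSF.
- exact: measurable_funD (mlG i Pi) mSG.
apply: le_trans.
  apply: Lambda_subadd; [exact: a1 | exact: mlF | exact: mSF | exact: mlG | exact: mSG | ..];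
    by move=> z; rewrite ?mulr_ge0 ?l0 ?F0 ?G0 ?S_ge0.
rewrite (@LambdaZ a (l i) (F i) (G i) (l0 _ Pi) (mF _ Pi) (mG _ Pi)) ?leeD2l //.
- by move=> z; exact: F0.
- by move=> z; exact: G0.
Qed.

End Lambda_convexity.

Lemma convex_comb_le (R : realType) (I : Type) (s : seq I) (P : pred I)
    (l : I -> R) (L : I -> \bar R) (M : \bar R) :
  (forall i, P i -> 0 <= l i) -> \sum_(i <- s | P i) l i = 1 ->
  (forall i, P i -> L i <= M)%E ->
  (\sum_(i <- s | P i) (l i)%:E * L i <= M)%E.
Proof.
move=> l0 l1 LM; apply: (@le_trans _ _ (\sum_(i <- s | P i) (l i)%:E * M)%E).
  by apply: lee_sum => i Pi; rewrite lee_wpmul2l ?lee_fin ?l0 ?LM.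
by rewrite -ge0_sume_distrl => [|i Pi]; rewrite ?sumEFin ?l1 ?mul1e ?lee_fin ?l0.
Qed.

Lemma mix_id (R : realType) (U : Type) (w : R) (f : U -> R) : mix w f f = f.
Proof. by apply: funext => z; rewrite /mix -mulrDl subrK mul1r. Qed.

Section mix_density.
Variables (R : realType) (d : measure_display) (T : measurableType d).
Variables (w : R) (f g : T -> R).

Lemma measurable_mix : measurable_fun setT f -> measurable_fun setT g ->
  measurable_fun setT (mix w f g).
Proof.
by move=> mf mg; apply: measurable_funD; apply: measurable_funM => //; exact: measurable_cst.
Qed.

Lemma mix_ge0 z : 0 <= w <= 1 -> 0 <= f z -> 0 <= g z -> 0 <= mix w f g z.
Proof. by move=> /andP[w0 w1] f0 g0; rewrite /mix addr_ge0 // mulr_ge0 // subr_ge0. Qed.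

End mix_density.

Section batch_distance.
Variable A : finType.
Implicit Types y S : {set A}.

Lemma dpm_le_refl n y : dpm_le n y y.
Proof. by case: n => [|n] //; left; elim: n => [|n IH] //; left. Qed.

Lemma dpm_le2_exchange S e f : e \notin S -> f \notin S -> dpm_le 2 (e |: S) (f |: S).
Proof.
move=> eS fS; right; exists S; split; last by left; exists f.
by right; exists (e |: S); split => //; right; exists e; rewrite setU11 finset.setU1K.
Qed.

Lemma dpm_le2_setU1D1 y c f : c \in y -> f \notin y :\ c -> dpm_le 2 y (f |: (y :\ c)).
Proof.
move=> cy fy; rewrite -{1}(finset.setD1K cy); apply: dpm_le2_exchange => //.
by rewrite !inE eqxx.
Qed.

End batch_distance.

Section pointed_batches.
Variable A : finType.
Implicit Types (X u x y : {set A}) (a e : A) (q : nat).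

Definition pointed_batch X q (k : {set A} * A) : bool :=
  [&& k.1 \subset X, #|k.1| == q & k.2 \in k.1].

Lemma setU1K_eq e u : ((e |: u) :\ e == u) = (e \notin u).
Proof. by apply/eqP/idP => [<-|/finset.setU1K //]; rewrite !inE eqxx. Qed.

Lemma notin_pointed_batch X q k e :
  pointed_batch X q k -> e \notin X -> e \notin k.1 :\ k.2.
Proof.
by case/and3P=> sX _ _ eX; apply: contra eX => /setD1P[_ /(fintype.subsetP sX)].
Qed.

Lemma card_pointed_batch_swap X q k e :
  pointed_batch X q k -> e \notin X -> #|e |: (k.1 :\ k.2)| = q.
Proof.
move=> Pk eX; have /and3P[_ /eqP <- ck] := Pk.
by rewrite cardsU1 (notin_pointed_batch Pk eX) (cardsD1 k.2 k.1) ck.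
Qed.

Variable V : nmodType.

Lemma sum_pointed_batch_fst X q (F : {set A} -> V) :
  \sum_(k : {set A} * A | pointed_batch X q k) F k.1 =
    (\sum_(y : {set A} | (y \subset X) && (#|y| == q)) F y) *+ q.
Proof.
rewrite (eq_bigl (fun k : {set A} * A =>
    ((k.1 \subset X) && (#|k.1| == q)) && (k.2 \in k.1))) => [|k].
  rewrite -(pair_big_dep (fun y => (y \subset X) && (#|y| == q)) (fun y c => c \in y)
    (fun y _ => F y)) -sumrMnl.
  by apply: eq_bigr => y /andP[_ /eqP <-]; rewrite sumr_const.
by rewrite /pointed_batch andbA.
Qed.

Lemma sum_pointed_batch_snd X q (G : {set A} -> V) : (0 < q)%N ->
  \sum_(k : {set A} * A | pointed_batch X q k) G (k.1 :\ k.2) =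
    (\sum_(u : {set A} | (u \subset X) && (#|u| == q.-1)) G u) *+ (#|X| - q.-1).
Proof.
move=> q_gt0.
rewrite (reindex_onto (fun j : {set A} * A => (j.2 |: j.1, j.2))
                     (fun k : {set A} * A => (k.1 :\ k.2, k.2))) /=; last first.
  by move=> [y c] /and3P[_ _ cy]; rewrite finset.setD1K.
rewrite (eq_bigl (fun j : {set A} * A =>
    ((j.1 \subset X) && (#|j.1| == q.-1)) && (j.2 \in X :\: j.1))) => [|[u e] /=]; last first.
  rewrite /pointed_batch /= setU11 xpair_eqE eqxx !andbT setU1K_eq finset.in_setD.
  have [eu|eu] := boolP (e \in u); first by rewrite !andbF.
  rewrite finset.subUset finset.sub1set cardsU1 eu add1n -[in LHS](prednK q_gt0) eqSS.
  by case: (e \in X); rewrite ?andbT ?andbF.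
rewrite -(pair_big_dep (fun u => (u \subset X) && (#|u| == q.-1)) (fun u e => e \in X :\: u)
    (fun u e => G ((e |: u) :\ e))).
rewrite -sumrMnl; apply: eq_bigr => u /andP[uX /eqP cu].
rewrite (eq_bigr (fun=> G u)) => [|e]; last first.
  by rewrite finset.in_setD => /andP[eu _]; rewrite finset.setU1K.
by rewrite sumr_const cardsD (finset.setIidPr uX) cu.
Qed.

Lemma sum_batches_mem x a q (F : {set A} -> V) : a \in x -> (0 < q)%N ->
  \sum_(u : {set A} | (u \subset x :\ a) && (#|u| == q.-1)) F (a |: u) =
    \sum_(y : {set A} | (y \subset x) && (#|y| == q) && (a \in y)) F y.
Proof.
move=> ax q_gt0.
rewrite [RHS](reindex_onto (fun u => a |: u) (fun y => y :\ a)) /=; last first.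
  by move=> y /andP[_ ay]; rewrite finset.setD1K.
apply: eq_bigl => u; rewrite setU11 andbT setU1K_eq subsetD1.
have [au|au] := boolP (a \in u); first by rewrite !andbF.
rewrite finset.subUset finset.sub1set ax cardsU1 au add1n.
by rewrite -[in RHS](prednK q_gt0) eqSS !andbT.
Qed.

End pointed_batches.

Section subsampling_decomposition.
Variables (R : realType) (A : finType) (U : Type) (q N : nat).
Hypotheses (q_gt0 : (0 < q)%N) (q_lt_N : (q < N)%N).

(* [lam] is the uniform weight on the [q * 'C(N.-1, q)] pointed batches of an [N.-1]-set. *)
Local Notation lam := (((q * 'C(N.-1, q))%:R)^-1 : R).
Local Notation w := (q%:R / N%:R : R).

Lemma binom_inv_split :
  'C(N, q)%:R^-1 = q%:R * (lam * (1 - w)) /\ 'C(N, q)%:R^-1 = (N - q)%:R * (lam * w).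
Proof.
have C_gt0 : (0 < 'C(N.-1, q))%N by rewrite bin_gt0; lia.
have CE : 'C(N, q)%:R = N%:R * 'C(N.-1, q)%:R / (N - q)%:R :> R.
  by rewrite -natrM mul_bin_down natrM mulrAC divff ?mul1r // pnatr_eq0; lia.
rewrite CE natrM natrB; last lia.
have : N%:R != 0 :> R by rewrite pnatr_eq0; lia.
have : q%:R != 0 :> R by rewrite pnatr_eq0; lia.
have : 'C(N.-1, q)%:R != 0 :> R by rewrite pnatr_eq0; lia.
have : N%:R - q%:R != 0 :> R by rewrite -natrB ?pnatr_eq0; lia.
move: (N%:R) (q%:R) ('C(N.-1, q)%:R) => n m c nm0 c0 m0 n0.
by split; field; rewrite ?nm0 ?c0 ?m0 ?n0.
Qed.

Lemma sum_pointed_batch_weight (X : {set A}) : #|X| = N.-1 ->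
  \sum_(k : {set A} * A | pointed_batch X q k) lam = 1.
Proof.
move=> cardX; rewrite (sum_pointed_batch_fst X q (fun=> lam)).
rewrite (eq_bigl (mem [set y : {set A} | y \subset X & #|y| == q])) => [|y]; last first.
  by rewrite !inE.
rewrite sumr_const cards_draws cardX -mulrnA -[lam *+ _]mulr_natr mulnC mulVf //.
by rewrite pnatr_eq0 muln_eq0 negb_or -!lt0n q_gt0 bin_gt0; lia.
Qed.

Lemma subsampled_pointed (b : {set A} -> U -> R) (x : {set A}) (a : A) :
  a \in x -> #|x| = N ->
  subsampled q b x = fun z => \sum_(k : {set A} * A | pointed_batch (x :\ a) q k)
    lam * mix w (b k.1) (b (a |: (k.1 :\ k.2))) z.
Proof.
move=> ax cardx; apply/funext => z; rewrite /subsampled cardx.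
have [C_out C_in] := binom_inv_split.
have cardX : (#|x :\ a| - q.-1 = N - q)%N.
  by move: (cardsD1 a x); rewrite ax cardx; lia.
under [RHS]eq_bigr do rewrite /mix mulrDr.
rewrite big_split /= (sum_pointed_batch_fst _ _ (fun y => lam * ((1 - w) * b y z))).
rewrite (sum_pointed_batch_snd _ (fun u => lam * (w * b (a |: u) z)) q_gt0) cardX.
rewrite (sum_batches_mem (fun y => lam * (w * b y z)) ax q_gt0) -!sumrMnl.
rewrite [LHS](bigID (fun y : {set A} => a \in y)) /= addrC.
congr (_ + _); apply: eq_big => [y|y _].
- by rewrite subsetD1 andbAC.
- by rewrite C_out -mulr_natl; ring.
- by [].
- by rewrite C_in -mulr_natl; ring.
Qed.

End subsampling_decomposition.

Lemma subsampled0 (R : realType) (A : finType) (U : Type) (b : {set A} -> U -> R)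
    (x : {set A}) :
  subsampled 0 b x = b finset.set0.
Proof.
apply: funext => z; rewrite /subsampled (big_pred1 finset.set0) ?bin0 ?invr1 ?mulr1 // => y.
by rewrite /= cards_eq0 andbC; case: eqP => // ->; rewrite finset.sub0set.
Qed.

Section worst_case_mix.
Variables (R : realType) (d : measure_display) (T : measurableType d).
Variables (mu : {measure set T -> \bar R}) (A : finType) (q : nat).
Variables (b : {set A} -> T -> R) (a w : R).
Local Open Scope ereal_scope.

Definition max_mix_Lambda : \bar R :=
  \big[maxe/-oo]_(y11 : {set A})
  \big[maxe/-oo]_(y12 : {set A})
  \big[maxe/-oo]_(y21 : {set A})
  \big[maxe/-oo]_(y22 : {set A} |
     `[< [/\ [/\ #|y11| = q, #|y12| = q, #|y21| = q & #|y22| = q],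
             y11 = y21,
             dpm_le 2 y11 y12, dpm_le 2 y11 y22 & dpm_le 2 y12 y22] >])
    Lambda mu a (mix w (b y11) (b y12)) (mix w (b y21) (b y22)).

Lemma le_max_mix_Lambda (y11 y12 y21 y22 : {set A}) :
  [/\ [/\ #|y11| = q, #|y12| = q, #|y21| = q & #|y22| = q],
      y11 = y21, dpm_le 2 y11 y12, dpm_le 2 y11 y22 & dpm_le 2 y12 y22] ->
  Lambda mu a (mix w (b y11) (b y12)) (mix w (b y21) (b y22)) <= max_mix_Lambda.
Proof.
move=> feasible; apply: le_trans (le_bigmax _ _ y11).
apply: le_trans (le_bigmax _ _ y12); apply: le_trans (le_bigmax _ _ y21).
exact: le_bigmax_cond (asboolT feasible).
Qed.

Lemma Lambda_pointed_le_max (X : {set A}) a0 a1 k :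
  a0 \notin X -> a1 \notin X -> pointed_batch X q k ->
  Lambda mu a (mix w (b k.1) (b (a0 |: (k.1 :\ k.2))))
              (mix w (b k.1) (b (a1 |: (k.1 :\ k.2)))) <= max_mix_Lambda.
Proof.
move=> a0X a1X Pk; have /and3P[_ /eqP ck cin] := Pk.
have [a0k a1k] := (notin_pointed_batch Pk a0X, notin_pointed_batch Pk a1X).
apply: le_max_mix_Lambda; split => //.
- by split; rewrite // (card_pointed_batch_swap Pk).
- exact: dpm_le2_setU1D1.
- exact: dpm_le2_setU1D1.
- exact: dpm_le2_exchange.
Qed.

Hypothesis b_density : forall y : {set A}, #|y| = q -> is_density mu (b y).

Lemma measurable_pointed_mix (X : {set A}) k e :
  pointed_batch X q k -> e \notin X ->
  measurable_fun setT (mix w (b k.1) (b (e |: (k.1 :\ k.2)))).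
Proof.
move=> Pk eX; have /and3P[_ /eqP ck _] := Pk.
apply: measurable_mix; first exact: (b_density ck).1.
exact: (b_density (card_pointed_batch_swap Pk eX)).1.
Qed.

Lemma pointed_mix_ge0 (X : {set A}) k e z : (0 <= w <= 1)%R ->
  pointed_batch X q k -> e \notin X ->
  (0 <= mix w (b k.1) (b (e |: (k.1 :\ k.2))) z)%R.
Proof.
move=> w01 Pk eX; have /and3P[_ /eqP ck _] := Pk.
apply: mix_ge0 => //; first exact: (b_density ck).2.1.
exact: (b_density (card_pointed_batch_swap Pk eX)).2.1.
Qed.

End worst_case_mix.

Theorem mainTheorem12 (R : realType) (d : measure_display) (T : measurableType d)
  (mu : {measure set T -> \bar R}) (A : finType) (q : nat)
  (b : {set A} -> T -> R)
  (hb : forall y : {set A}, #|y| = q -> is_density mu (b y))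
  (a : R) (ha : 1 < a) (N : nat) (x x' : {set A})
  (hxN : #|x| = N) (hqx : (q < #|x|)%N) (hqx' : (q < #|x'|)%N)
  (hxx' : subst_rel x x') :
  let w := q%:R / N%:R in
  (Lambda mu a (subsampled q b x) (subsampled q b x') <=
   \big[maxe/-oo]_(y11 : {set A})
   \big[maxe/-oo]_(y12 : {set A})
   \big[maxe/-oo]_(y21 : {set A})
   \big[maxe/-oo]_(y22 : {set A} |
      `[< [/\ [/\ #|y11| = q, #|y12| = q, #|y21| = q & #|y22| = q],
              y11 = y21,
              dpm_le 2 y11 y12, dpm_le 2 y11 y22 & dpm_le 2 y12 y22] >])
     Lambda mu a (mix w (b y11) (b y12)) (mix w (b y21) (b y22)))%E.
Proof.
cbv zeta; set w := q%:R / N%:R.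
change (Lambda mu a (subsampled q b x) (subsampled q b x') <= max_mix_Lambda mu q b a w)%E.
have [q0|q_gt0] := posnP q.
  rewrite q0 !subsampled0 -[b _](mix_id w); apply: le_max_mix_Lambda.
  by split; [split; rewrite cards0 | | exact: dpm_le_refl..].
case: hxx' => a0 [a1 [a0x a1x ->]]; set X := x :\ a0.
have q_lt_N : (q < N)%N by rewrite -hxN.
have a0X : a0 \notin X by rewrite !inE eqxx.
have a1X : a1 \notin X by rewrite !inE (negbTE a1x) andbF.
have cardX : #|X| = N.-1 by move: (cardsD1 a0 x); rewrite -/X a0x hxN; lia.
have cardx' : #|a1 |: X| = N by rewrite cardsU1 a1X cardX; lia.
have w01 : 0 <= w <= 1 by rewrite divr_ge0 //= ler_pdivrMr ?mul1r ?ler_nat ?ltr0n; lia.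
rewrite (subsampled_pointed q_gt0 q_lt_N b a0x hxN).
rewrite (subsampled_pointed q_gt0 q_lt_N b (setU11 a1 X) cardx') finset.setU1K //.
apply: le_trans.
  apply: Lambda_convex => // [k Pk|k Pk|k z Pk|k z Pk].
  - exact (measurable_pointed_mix w hb Pk a0X).
  - exact (measurable_pointed_mix w hb Pk a1X).
  - exact (pointed_mix_ge0 hb z w01 Pk a0X).
  - exact (pointed_mix_ge0 hb z w01 Pk a1X).
apply: convex_comb_le => [k _||k Pk]; first by rewrite invr_ge0.
- exact: sum_pointed_batch_weight.
- exact (Lambda_pointed_le_max mu b a w a0X a1X Pk).
Qed.
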